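(* Let $\mathbf M$ be an $(N+1,k)$-admissible matrix with characteristic triple $(\mu,\widetilde{\mathbf w},\widetilde{\mathbf z})$, let $h\in(0,1]$ and $\mathbf M^{(h)}:=\mathbf I+h(\mathbf M-\mathbf I)$. Then $\mathbf M^{(h)}$ has characteristic triple $(\mu_h,\widetilde{\mathbf w},\widetilde{\mathbf z})$ with $\mu_h:=1-h(1-\mu)$; in particular $\mathbf M$ and $\mathbf M^{(h)}$ share their characteristic eigenvectors. Moreover, $\mathbf M^{(h)}$ is micro-reversible if and only if $\mathbf M$ is. Finally, if $k=2$ and $\mathbf M$ is a Kimura matrix with fixation probability $\mathbf F$, then so is $\mathbf M^{(h)}$ (with the same $\mathbf F$).
   Context: Column-stochastic matrices. For $1\le k<N-1$, an $(N+1)\times(N+1)$ column-stochastic $\mathbf M$ is $(N+1,k)$-admissible if, after a simultaneous permutation of rows and columns, $\mathbf M=\begin{pmatrix}\widetilde{\mathbf M}&\mathbf 0\\ \mathbf A&\mathbf I\end{pmatrix}$ with $\mathbf I$ the $k\times k$ identity, $\widetilde{\mathbf M}$ irreducible of size $N+1-k$ (the core) and $\mathbf A$ with no zero row. The characteristic triple $(\mu,\widetilde{\mathbf w},\widetilde{\mathbf z})$ is $\mu=\rho(\widetilde{\mathbf M})\in(0,1)$ together with the positive left/right eigenvectors $\widetilde{\mathbf w},\widetilde{\mathbf z}$ of the core for $\mu$, normalised by $\langle\widetilde{\mathbf w},\mathbf 1\rangle=\langle\widetilde{\mathbf w},\widetilde{\mathbf z}\rangle=1$. $\mathbf M$ is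 micro-reversible if $\widetilde w_i\widetilde M_{ij}\widetilde z_j=\widetilde w_j\widetilde M_{ji}\widetilde z_i$ for all $i,j$. An $(N+1,2)$-admissible matrix is called a Kimura matrix; labelling states $0,\dots,N$ with absorbing states $0$ and $N$, its fixation probability is the unique vector $\mathbf F$ with $\mathbf F^\dagger\mathbf M=\mathbf F^\dagger$, $F_0=0$, $F_N=1$. *)

From HB Require Import structures.
From mathcomp Require Import all_boot all_order all_algebra.
From mathcomp Require Import complex.
Set Implicit Arguments. Unset Strict Implicit. Unset Printing Implicit Defensive.
Import Order.TTheory GRing.Theory Num.Theory.
Local Open Scope ring_scope.

Section Defs.
Variable R : rcfType.

Definition col_stochastic n (M : 'M[R]_n) : Prop :=
  (forall i j, 0 <= M i j) /\ (forall j, \sum_i M i j = 1).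

Definition irreducible_mx n (A : 'M[R]_n) : Prop :=
  forall i j, exists m : nat, 0 < (A ^+ m) i j.

Definition core_mx n (M : 'M[R]_n) (K : {set 'I_n}) : 'M[R]_#|~: K| :=
  \matrix_(i, j) M (enum_val i) (enum_val j).

(* block structure  M = [[Mtilde, 0], [A, I]]  up to simultaneous permutation,
   with absorbing index set K (the identity block), irreducible core
   and A without zero row *)
Definition admissible_struct n (M : 'M[R]_n) (K : {set 'I_n}) : Prop :=
  [/\ col_stochastic M,
      (forall i j, j \in K -> M i j = (i == j)%:R),
      irreducible_mx (core_mx M K)
    & (forall i, i \in K -> exists2 j, j \notin K & M i j != 0)].

Definition admissible (N k : nat) (M : 'M[R]_N.+1) : Prop :=
  exists K : {set 'I_N.+1}, #|K| = k /\ admissible_struct M K.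

Definition cmx n (A : 'M[R]_n) : 'M[R[i]]_n := map_mx (fun x => x%:C%C) A.

Definition spectral_radius n (A : 'M[R]_n) (r : R) : Prop :=
  (exists l : R[i], root (char_poly (cmx A)) l /\ `|l| = r%:C%C) /\
  (forall l : R[i], root (char_poly (cmx A)) l -> `|l| <= r%:C%C).

Definition char_triple n (M : 'M[R]_n) (K : {set 'I_n}) (mu : R)
    (w z : 'cV[R]_#|~: K|) : Prop :=
  [/\ spectral_radius (core_mx M K) mu,
      (forall i, 0 < w i 0) /\ (forall i, 0 < z i 0),
      w^T *m core_mx M K = mu *: w^T,
      core_mx M K *m z = mu *: z
    & \sum_i w i 0 = 1 /\ \sum_i w i 0 * z i 0 = 1].

Definition micro_reversible n (M : 'M[R]_n) (K : {set 'I_n})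
    (w z : 'cV[R]_#|~: K|) : Prop :=
  forall i j, w i 0 * core_mx M K i j * z j 0 = w j 0 * core_mx M K j i * z i 0.

Definition kimura_set (N : nat) : {set 'I_N.+1} := [set ord0; ord_max].

Definition kimura (N : nat) (M : 'M[R]_N.+1) : Prop :=
  #|kimura_set N| = 2%N /\ admissible_struct M (kimura_set N).

Definition fix_eqs (N : nat) (M : 'M[R]_N.+1) (F : 'rV[R]_N.+1) : Prop :=
  [/\ F *m M = F, F 0 ord0 = 0 & F 0 ord_max = 1].

Definition fixation_probability (N : nat) (M : 'M[R]_N.+1) (F : 'rV[R]_N.+1) : Prop :=
  fix_eqs M F /\ (forall G, fix_eqs M G -> G = F).

Definition Mh n (h : R) (M : 'M[R]_n) : 'M[R]_n := 1%:M + h *: (M - 1%:M).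

End Defs.

Arguments char_triple {R n} M K mu w z.
Arguments micro_reversible {R n} M K w z.
Arguments admissible {R} N k M.

(* M^(h) = (1 - h) I + h M is an affine function of M with slope h > 0, so it has the
   same left and right eigenvectors as M and its eigenvalues are the 1 - h + h l for the
   eigenvalues l of M.  As |1 - h + h l| <= 1 - h + h |l|, with equality at the real
   eigenvalue mu carried by the positive eigenvector w, the spectral radius mu becomes
   1 - h (1 - mu).  Off the diagonal M^(h) = h M, so irreducibility, nonzero rows and
   micro-reversibility transfer, while column sums and identity columns are kept. *)
From HB Require Import structures.
From mathcomp Require Import all_boot all_order all_algebra.
From mathcomp Require Import complex.
From mathcomp Require Import ring.
Set Implicit Arguments. Unset Strict Implicit. Unset Printing Implicit Defensive.
Import Order.TTheory GRing.Theory Num.Theory.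
Local Open Scope ring_scope.

Lemma eigenvalue_shift_scale (F : fieldType) n (A : 'M[F]_n) (a b l : F) :
  b != 0 -> eigenvalue (a%:M + b *: A) (a + b * l) = eigenvalue A l.
Proof.
move=> b0; have affineE (v : 'rV_n) :
    (v *m (a%:M + b *: A) == (a + b * l) *: v) = (v *m A == l *: v).
  rewrite mulmxDr mul_mx_scalar -scalemxAr scalerDl -scalerA (inj_eq (addrI _)).
  by rewrite (inj_eq (scalerI b0)).
apply/eigenvalueP/eigenvalueP => -[v Av v0]; exists v => //; apply/eqP.
  by rewrite -affineE Av.
by rewrite affineE Av.
Qed.

Lemma scalemxX (R : comPzSemiRingType) n (c : R) (A : 'M[R]_n) m :
  (c *: A) ^+ m = c ^+ m *: A ^+ m.
Proof.
elim: m => [|m IHm]; first by rewrite !expr0 scale1r.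
by rewrite !exprS IHm -!mulmxE -scalemxAl -scalemxAr scalerA.
Qed.

Lemma entrywise_le_exp (R : numDomainType) n (A B : 'M[R]_n) :
  (forall i j, 0 <= A i j <= B i j) ->
  forall m i j, 0 <= (A ^+ m) i j <= (B ^+ m) i j.
Proof.
move=> AB; elim=> [|m IHm] i j; first by rewrite !expr0 mxE lexx ler0n.
rewrite !exprS -!mulmxE !mxE; apply/andP; split; [apply: sumr_ge0 | apply: ler_sum];
  move=> k _; have /andP[A0 AB0] := AB i k; have /andP[Am0 ABm] := IHm k j.
- exact: mulr_ge0.
- exact: ler_pM.
Qed.

Section AffineRelaxation.
Variables (R : rcfType) (h : R).

Lemma Mh_entry n (A : 'M[R]_n) i j :
  Mh h A i j = (1 - h) * (i == j)%:R + h * A i j.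
Proof. by rewrite !mxE; ring. Qed.

Lemma core_mx_Mh n (M : 'M[R]_n) K : core_mx (Mh h M) K = Mh h (core_mx M K).
Proof. by apply/matrixP => i j; rewrite !mxE (inj_eq enum_val_inj). Qed.

Lemma mulmx_MhE m n (v : 'M[R]_(m, n)) A : v *m Mh h A = v + h *: (v *m A - v).
Proof. by rewrite mulmxDr mulmx1 -scalemxAr mulmxBr mulmx1. Qed.

Lemma Mh_mulmxE m n (A : 'M[R]_n) (v : 'M[R]_(n, m)) :
  Mh h A *m v = v + h *: (A *m v - v).
Proof. by rewrite mulmxDl mul1mx -scalemxAl mulmxBl mul1mx. Qed.

Lemma scale_Mh_eigenvalue m n mu (v : 'M[R]_(m, n)) :
  (1 - h * (1 - mu)) *: v = v + h *: (mu *: v - v).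
Proof. by apply/matrixP => i j; rewrite !mxE; ring. Qed.

Hypothesis h_neq0 : h != 0.

Lemma mulmx_Mh_eigen m n (A : 'M[R]_n) mu (v : 'M[R]_(m, n)) :
  (v *m Mh h A == (1 - h * (1 - mu)) *: v) = (v *m A == mu *: v).
Proof.
rewrite mulmx_MhE scale_Mh_eigenvalue (inj_eq (addrI _)) (inj_eq (scalerI _)) //.
by rewrite (inj_eq (subIr v)).
Qed.

Lemma Mh_mulmx_eigen m n (A : 'M[R]_n) mu (v : 'M[R]_(n, m)) :
  (Mh h A *m v == (1 - h * (1 - mu)) *: v) = (A *m v == mu *: v).
Proof.
rewrite Mh_mulmxE scale_Mh_eigenvalue (inj_eq (addrI _)) (inj_eq (scalerI _)) //.
by rewrite (inj_eq (subIr v)).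
Qed.

Lemma micro_reversible_Mh n (M : 'M[R]_n) K w z :
  micro_reversible (Mh h M) K w z <-> micro_reversible M K w z.
Proof.
have offdiagE i j : i != j -> core_mx (Mh h M) K i j = h * core_mx M K i j.
  by move=> /negbTE ij; rewrite core_mx_Mh Mh_entry ij mulr0 add0r.
have hE a b c : a * (h * b) * c = h * (a * b * c) by ring.
split=> rev i j; have [-> // | ij] := eqVneq i j; have ji : j != i by rewrite eq_sym.
  by apply: (mulfI h_neq0); rewrite -!hE -(offdiagE _ _ ij) -(offdiagE _ _ ji) rev.
by rewrite (offdiagE _ _ ij) (offdiagE _ _ ji) !hE rev.
Qed.

Lemma fix_eqs_Mh N (M : 'M[R]_N.+1) F : fix_eqs (Mh h M) F <-> fix_eqs M F.
Proof.
have fixE : (F *m Mh h M == F) = (F *m M == F).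
  by have := mulmx_Mh_eigen M 1 F; rewrite subrr mulr0 subr0 !scale1r.
by split=> -[/eqP FM F0 F1]; split=> //; apply/eqP; rewrite ?fixE // -fixE.
Qed.

Lemma fixation_probability_Mh N (M : 'M[R]_N.+1) F :
  fixation_probability (Mh h M) F <-> fixation_probability M F.
Proof.
by split=> -[/fix_eqs_Mh FM uniq]; split=> // G /fix_eqs_Mh; apply: uniq.
Qed.

End AffineRelaxation.

Section ComplexSpectrum.
Variable R : rcfType.
Local Open Scope complex_scope.

Lemma cmx_Mh n (h : R) (A : 'M[R]_n) : cmx (Mh h A) = (1 - h)%:C%:M + h%:C *: cmx A.
Proof.
apply/matrixP => i j.
by rewrite [LHS]mxE Mh_entry !mxE rmorphD !rmorphM rmorph_nat mulr_natr.
Qed.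

Lemma root_char_cmx n (A : 'M[R]_n) (v : 'rV[R]_n) mu :
  v != 0 -> v *m A = mu *: v -> root (char_poly (cmx A)) mu%:C.
Proof.
move=> v_neq0 vA; rewrite -eigenvalue_root_char; apply/eigenvalueP.
exists (map_mx (real_complex R) v); last by rewrite map_mx_eq0.
have -> : cmx A = map_mx (real_complex R) A by apply/matrixP => i j; rewrite !mxE.
by rewrite -map_mxM vA; apply/matrixP => i j; rewrite !mxE rmorphM.
Qed.

Lemma root_char_cmx_Mh n (h : R) (A : 'M[R]_n) l : h != 0 ->
  root (char_poly (cmx (Mh h A))) ((1 - h)%:C + h%:C * l) = root (char_poly (cmx A)) l.
Proof.
by move=> h_neq0; rewrite -!eigenvalue_root_char cmx_Mh eigenvalue_shift_scale ?fmorph_eq0.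
Qed.

End ComplexSpectrum.

Section StochasticRelaxation.
Variables (R : rcfType) (h : R).
Hypotheses (h_gt0 : 0 < h) (h_le1 : h <= 1).
Local Open Scope complex_scope.

Lemma col_stochastic_Mh n (A : 'M[R]_n) : col_stochastic A -> col_stochastic (Mh h A).
Proof.
move=> [A_ge0 A_sum]; split=> [i j | j].
  by rewrite Mh_entry addr_ge0 ?mulr_ge0 ?ler0n ?subr_ge0 ?(ltW h_gt0).
under eq_bigr do rewrite Mh_entry.
rewrite big_split /= -!mulr_sumr A_sum (bigD1 j) //= eqxx big1 => [|i /negbTE -> //].
by rewrite addr0 !mulr1 subrK.
Qed.

Lemma irreducible_Mh n (A : 'M[R]_n) :
  (forall i j, 0 <= A i j) -> irreducible_mx A -> irreducible_mx (Mh h A).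
Proof.
move=> A_ge0 irrA i j; have [m Am_gt0] := irrA i j; exists m.
have hA_le i' j' : 0 <= (h *: A) i' j' <= Mh h A i' j'.
  rewrite mxE Mh_entry (mulr_ge0 (ltW h_gt0)) //= lerDr.
  by rewrite mulr_ge0 ?ler0n ?subr_ge0.
have /andP[_ le_m] := entrywise_le_exp hA_le m i j.
by apply: lt_le_trans le_m; rewrite scalemxX mxE mulr_gt0 ?exprn_gt0.
Qed.

Lemma admissible_struct_Mh n (M : 'M[R]_n) K :
  admissible_struct M K -> admissible_struct (Mh h M) K.
Proof.
move=> [stochM idK irrM rowK]; split.
- exact: col_stochastic_Mh.
- by move=> i j jK; rewrite Mh_entry idK //; ring.
- rewrite core_mx_Mh; apply: irreducible_Mh => // i j.
  by rewrite mxE; case: stochM.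
- move=> i iK; have [j jK Mij] := rowK i iK; exists j => //.
  have /negbTE ij : i != j by apply: contraNneq jK => <-.
  by rewrite Mh_entry ij mulr0 add0r mulf_neq0 // gt_eqF.
Qed.

Lemma kimura_Mh N (M : 'M[R]_N.+1) : kimura M -> kimura (Mh h M).
Proof. by move=> [? admM]; split; last exact: admissible_struct_Mh. Qed.

Lemma spectral_radius_Mh n (A : 'M[R]_n) mu :
  root (char_poly (cmx A)) mu%:C -> spectral_radius A mu ->
  spectral_radius (Mh h A) (1 - h * (1 - mu)).
Proof.
move=> mu_root [[l0 [_ l0_norm]] le_mu].
have h_neq0 : h != 0 := lt0r_neq0 h_gt0.
have mu_ge0 : 0 <= mu by rewrite -ler0c -l0_norm normr_ge0.
have rhoE : (1 - h * (1 - mu))%:C = (1 - h)%:C + h%:C * mu%:C.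
  by rewrite -rmorphM -rmorphD; congr (_%:C); ring.
split.
  exists (1 - h * (1 - mu))%:C; rewrite rhoE root_char_cmx_Mh //; split=> //.
  rewrite -rhoE ger0_norm // ler0c.
  have -> : 1 - h * (1 - mu) = (1 - h) + h * mu by ring.
  by rewrite addr_ge0 ?mulr_ge0 ?subr_ge0 ?(ltW h_gt0).
move=> l; set l1 := (l - (1 - h)%:C) / h%:C.
have -> : l = (1 - h)%:C + h%:C * l1 by rewrite mulrC divfK ?fmorph_eq0 // addrC subrK.
rewrite root_char_cmx_Mh // rhoE => /le_mu l1_le.
apply: le_trans (ler_normD _ _) _.
have h_ge0C : 0 <= h%:C by rewrite ler0c ltW.
have h1_ge0C : 0 <= (1 - h)%:C by rewrite ler0c subr_ge0.
by rewrite normrM (ger0_norm h_ge0C) (ger0_norm h1_ge0C) lerD2l ler_wpM2l.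
Qed.

Lemma char_triple_Mh n (M : 'M[R]_n) K mu w z :
  char_triple M K mu w z -> char_triple (Mh h M) K (1 - h * (1 - mu)) w z.
Proof.
move=> [rho_mu pos wM Mz [w_sum wz_sum]].
have h_neq0 : h != 0 := lt0r_neq0 h_gt0.
have wT_neq0 : w^T != 0.
  apply/eqP => /(congr1 trmx); rewrite trmxK trmx0 => w0.
  by move: w_sum; rewrite w0 big1 => [/eqP|i _]; rewrite ?mxE // eq_sym oner_eq0.
rewrite /char_triple core_mx_Mh; split=> //.
- exact: spectral_radius_Mh (root_char_cmx wT_neq0 wM) rho_mu.
- by apply/eqP; rewrite (mulmx_Mh_eigen h_neq0) wM.
- by apply/eqP; rewrite (Mh_mulmx_eigen h_neq0) Mz.
Qed.

End StochasticRelaxation.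

Theorem lemma8 (R : rcfType) (N k : nat) (M : 'M[R]_N.+1) (K : {set 'I_N.+1})
    (mu : R) (w z : 'cV[R]_#|~: K|) (h : R) :
  (1 <= k)%N -> (k < N - 1)%N ->
  #|K| = k -> admissible_struct M K ->
  char_triple M K mu w z ->
  0 < h -> h <= 1 ->
  [/\ admissible_struct (Mh h M) K /\ admissible N k (Mh h M),
      char_triple (Mh h M) K (1 - h * (1 - mu)) w z,
      (micro_reversible (Mh h M) K w z <-> micro_reversible M K w z)
    & (k = 2%N -> K = kimura_set N ->
       forall F : 'rV[R]_N.+1, fixation_probability M F ->
       kimura (Mh h M) /\ fixation_probability (Mh h M) F)].
Proof.
move=> _ _ cardK admM triple h_gt0 h_le1.
have h_neq0 : h != 0 := lt0r_neq0 h_gt0.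
have admMh := admissible_struct_Mh h_gt0 h_le1 admM.
split.
- by split=> //; exists K.
- exact: char_triple_Mh.
- exact: micro_reversible_Mh.
- move=> k2 Kkim F /(fixation_probability_Mh h_neq0) FMh; split=> //.
  by apply: kimura_Mh => //; rewrite /kimura -Kkim cardK k2.
Qed.
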